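(* Let $\bar L^g>0$, $\gamma_0>0$, $\beta_0:=\bar L^g/\gamma_0$, and let $c_k\in(-1,1]$ for $k\ge0$. Define $a_0:=\big(1+c_0+\sqrt{4(1-c_0)+(1+c_0)^2}\big)/2$, $a_{k+1}:=\big(1+c_{k+1}+\sqrt{4a_k^2+(1-c_{k+1})^2}\big)/2$, $\tau_k:=a_k^{-1}$, $\beta_{k+1}:=(1-\tau_k)\beta_k$, $\gamma_{k+1}:=(1-c_k\tau_k)\gamma_k$, and $s_k:=\sum_{i=1}^kc_i$. Then for all $k\ge0$, $$\frac{k+a_0+s_k}{2}\le a_k\le k+a_0,\qquad \frac{\bar L^g}{(k+a_0)^2}\le\gamma_{k+1}\beta_{k+1}\le\frac{4\bar L^g}{(k+a_0+s_k)^2}.$$ Moreover, if $c_k=0$ for all $k$, then $\frac{\beta_0}{(k+2)^2}\le\beta_{k+1}\le\frac{4\beta_0}{(k+1)^2}$, and if $c_k=1$ for all $k$, then $\beta_{k+1}=\frac{\beta_0}{k+2}$. *)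

From Stdlib Require Import Reals Lra.
Open Scope R_scope.

Fixpoint aseq (c : nat -> R) (k : nat) : R :=
  match k with
  | O => (1 + c O + sqrt (4 * (1 - c O) + (1 + c O) ^ 2)) / 2
  | S j => (1 + c (S j) + sqrt (4 * (aseq c j) ^ 2 + (1 - c (S j)) ^ 2)) / 2
  end.

Definition tau (c : nat -> R) (k : nat) : R := / aseq c k.

Fixpoint beta (Lg gamma0 : R) (c : nat -> R) (k : nat) : R :=
  match k with
  | O => Lg / gamma0
  | S j => (1 - tau c j) * beta Lg gamma0 c j
  end.

Fixpoint gamma (gamma0 : R) (c : nat -> R) (k : nat) : R :=
  match k with
  | O => gamma0
  | S j => (1 - c j * tau c j) * gamma gamma0 c j
  end.

Fixpoint sseq (c : nat -> R) (k : nat) : R :=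
  match k with
  | O => 0
  | S j => sseq c j + c (S j)
  end.

(* The recursion says that a_k is the larger root of (x - 1)(x - c_k) = a_(k-1)^2,
   where a_(-1) := 1.  Comparing this root with a_(k-1) shows that each step increases
   a by at least (1 + c_k)/2 and at most 1, which gives the bounds on a_k.  The same
   identity gives (1 - c_k tau_k)(1 - tau_k) = a_(k-1)^2 / a_k^2, so the product
   gamma_(k+1) beta_(k+1) telescopes to Lg / a_k^2, and the remaining bounds follow. *)
From Stdlib Require Import Reals Lra Psatz.
Open Scope R_scope.

Definition larger_root (c A : R) : R := (1 + c + sqrt (4 * A ^ 2 + (1 - c) ^ 2)) / 2.

Lemma larger_root_eq (c A : R) :
  (larger_root c A - 1) * (larger_root c A - c) = A ^ 2.
Proof.
  unfold larger_root.
  assert (Hs : sqrt (4 * A ^ 2 + (1 - c) ^ 2) * sqrt (4 * A ^ 2 + (1 - c) ^ 2)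
               = 4 * A ^ 2 + (1 - c) ^ 2)
    by (apply sqrt_sqrt; pose proof pow2_ge_0 A; pose proof pow2_ge_0 (1 - c); lra).
  nra.
Qed.

Lemma larger_root_ge (c A : R) : 0 <= A -> A + (1 + c) / 2 <= larger_root c A.
Proof.
  intro HA. unfold larger_root.
  assert (2 * A <= sqrt (4 * A ^ 2 + (1 - c) ^ 2)).
  { rewrite <- (sqrt_pow2 (2 * A)) by lra.
    apply sqrt_le_1_alt. pose proof pow2_ge_0 (1 - c). lra. }
  lra.
Qed.

Lemma larger_root_le (c A : R) : 0 <= A -> c <= 1 -> larger_root c A <= A + 1.
Proof.
  intros HA Hc. unfold larger_root.
  assert (sqrt (4 * A ^ 2 + (1 - c) ^ 2) <= 2 * A + (1 - c)).
  { rewrite <- (sqrt_pow2 (2 * A + (1 - c))) by lra. apply sqrt_le_1_alt. nra. }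
  lra.
Qed.

Lemma larger_root_1 (A : R) : 0 <= A -> larger_root 1 A = A + 1.
Proof.
  intro HA. apply Rle_antisym; [apply larger_root_le | pose proof larger_root_ge 1 A HA]; lra.
Qed.

Lemma aseq_0 (c : nat -> R) : aseq c 0 = larger_root (c O) 1.
Proof. unfold larger_root. simpl. do 3 f_equal. ring. Qed.

Lemma aseq_S (c : nat -> R) (k : nat) : aseq c (S k) = larger_root (c (S k)) (aseq c k).
Proof. reflexivity. Qed.

Lemma div_sqr_le_contravar (L x y : R) : 0 <= L -> 0 < x -> x <= y -> L / y ^ 2 <= L / x ^ 2.
Proof.
  intros. unfold Rdiv. apply Rmult_le_compat_l; [lra|].
  apply Rinv_le_contravar; [apply pow_lt | apply pow_incr]; lra.
Qed.

Section Sequences.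

Variable c : nat -> R.
Hypothesis hc : forall k, -1 < c k <= 1.

Lemma aseq_gt1 (k : nat) : 1 < aseq c k.
Proof.
  induction k as [|k IH].
  - rewrite aseq_0. pose proof larger_root_ge (c O) 1. pose proof hc 0. lra.
  - rewrite aseq_S. pose proof larger_root_ge (c (S k)) (aseq c k). pose proof hc (S k). lra.
Qed.

Lemma aseq_le (k : nat) : aseq c k <= INR k + aseq c 0.
Proof.
  induction k as [|k IH]; [simpl; lra|].
  rewrite aseq_S, S_INR.
  pose proof larger_root_le (c (S k)) (aseq c k). pose proof aseq_gt1 k. pose proof hc (S k).
  lra.
Qed.

Lemma aseq_ge (k : nat) : aseq c 0 + (INR k + sseq c k) / 2 <= aseq c k.
Proof.
  induction k as [|k IH]; [simpl; lra|].
  rewrite aseq_S, S_INR. simpl sseq.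
  pose proof larger_root_ge (c (S k)) (aseq c k). pose proof aseq_gt1 k. lra.
Qed.

Lemma sseq_ge (k : nat) : - INR k <= sseq c k.
Proof.
  induction k as [|k IH]; [simpl; lra|].
  rewrite S_INR. simpl. pose proof hc (S k). lra.
Qed.

Lemma gamma_beta_step (Lg gamma0 : R) (j : nat) :
  gamma gamma0 c (S j) * beta Lg gamma0 c (S j) * aseq c j ^ 2 =
  (aseq c j - 1) * (aseq c j - c j) * (gamma gamma0 c j * beta Lg gamma0 c j).
Proof.
  cbn [gamma beta]. unfold tau. pose proof aseq_gt1 j. field. lra.
Qed.

Lemma gamma_beta_mul_sqr (Lg gamma0 : R) (k : nat) : gamma0 <> 0 ->
  gamma gamma0 c (S k) * beta Lg gamma0 c (S k) * aseq c k ^ 2 = Lg.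
Proof.
  intro hg. induction k as [|k IH].
  - rewrite gamma_beta_step, aseq_0, larger_root_eq. simpl. field. exact hg.
  - rewrite gamma_beta_step, aseq_S, larger_root_eq. lra.
Qed.

Lemma gamma_beta (Lg gamma0 : R) (k : nat) : gamma0 <> 0 ->
  gamma gamma0 c (S k) * beta Lg gamma0 c (S k) = Lg / aseq c k ^ 2.
Proof.
  intro hg. pose proof aseq_gt1 k.
  apply (Rmult_eq_reg_r (aseq c k ^ 2)); [|apply pow_nonzero; lra].
  rewrite gamma_beta_mul_sqr by exact hg. field. lra.
Qed.

Lemma gamma_beta_bounds (Lg gamma0 : R) (k : nat) : 0 <= Lg -> gamma0 <> 0 ->
  Lg / (INR k + aseq c 0) ^ 2 <= gamma gamma0 c (S k) * beta Lg gamma0 c (S k) /\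
  gamma gamma0 c (S k) * beta Lg gamma0 c (S k) <= 4 * Lg / (INR k + aseq c 0 + sseq c k) ^ 2.
Proof.
  intros hL hg. rewrite gamma_beta by exact hg.
  pose proof aseq_ge k. pose proof aseq_gt1 k. pose proof aseq_gt1 0. pose proof sseq_ge k.
  split; [apply div_sqr_le_contravar; [| |apply aseq_le]; lra|].
  replace (4 * Lg / (INR k + aseq c 0 + sseq c k) ^ 2)
    with (Lg / ((INR k + aseq c 0 + sseq c k) / 2) ^ 2) by (field; lra).
  apply div_sqr_le_contravar; lra.
Qed.

End Sequences.

Lemma gamma_c0 (gamma0 : R) (c : nat -> R) (k : nat) :
  (forall j, c j = 0) -> gamma gamma0 c k = gamma0.
Proof. intro H0. induction k as [|k IH]; simpl; [|rewrite H0, IH]; ring. Qed.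

Lemma sseq_c0 (c : nat -> R) (k : nat) : (forall j, c j = 0) -> sseq c k = 0.
Proof. intro H0. induction k as [|k IH]; simpl; [|rewrite H0, IH]; ring. Qed.

Lemma beta_bounds_c0 (Lg gamma0 : R) (c : nat -> R) (k : nat) :
  0 <= Lg -> 0 < gamma0 -> (forall j, c j = 0) ->
  beta Lg gamma0 c 0 / (INR k + 2) ^ 2 <= beta Lg gamma0 c (S k) /\
  beta Lg gamma0 c (S k) <= 4 * beta Lg gamma0 c 0 / (INR k + 1) ^ 2.
Proof.
  intros hL hg H0.
  assert (hc : forall j, -1 < c j <= 1) by (intro j; rewrite H0; lra).
  pose proof aseq_gt1 c hc k. pose proof aseq_gt1 c hc 0.
  assert (beta_S : beta Lg gamma0 c (S k) = beta Lg gamma0 c 0 / aseq c k ^ 2).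
  { pose proof gamma_beta c hc Lg gamma0 k ltac:(lra) as P. rewrite gamma_c0 in P by exact H0.
    apply (Rmult_eq_reg_l gamma0); [|lra].
    rewrite P. simpl. field. lra. }
  assert (0 <= beta Lg gamma0 c 0) 
    by (unfold Rdiv; apply Rmult_le_pos; [|apply Rlt_le, Rinv_0_lt_compat]; lra).
  assert (aseq c 0 <= 2) by (rewrite aseq_0; apply larger_root_le; rewrite ?H0; lra).
  pose proof aseq_le c hc k. pose proof aseq_ge c hc k. pose proof pos_INR k.
  rewrite sseq_c0 in * by exact H0. rewrite beta_S.
  split; [apply div_sqr_le_contravar; lra|].
  replace (4 * beta Lg gamma0 c 0 / (INR k + 1) ^ 2)
    with (beta Lg gamma0 c 0 / ((INR k + 1) / 2) ^ 2) by (field; lra).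
  apply div_sqr_le_contravar; lra.
Qed.

Lemma aseq_c1 (c : nat -> R) (k : nat) : (forall j, c j = 1) -> aseq c k = INR k + 2.
Proof.
  intro H1. induction k as [|k IH].
  - rewrite aseq_0, H1, larger_root_1; simpl; lra.
  - rewrite aseq_S, H1, IH, larger_root_1, S_INR; pose proof pos_INR k; lra.
Qed.

Lemma beta_c1 (Lg gamma0 : R) (c : nat -> R) (k : nat) : (forall j, c j = 1) ->
  beta Lg gamma0 c k = beta Lg gamma0 c 0 / (INR k + 1).
Proof.
  intro H1. induction k as [|k IH].
  - cbn [INR]. rewrite Rplus_0_l, Rdiv_1_r. reflexivity.
  - change (beta Lg gamma0 c (S k)) with ((1 - tau c k) * beta Lg gamma0 c k).
    rewrite IH. unfold tau. rewrite aseq_c1, S_INR by exact H1.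
    pose proof pos_INR k. field. lra.
Qed.

Theorem lemma4p4 (Lg gamma0 : R) (c : nat -> R)
  (hL : 0 < Lg) (hg : 0 < gamma0)
  (hc : forall k, -1 < c k <= 1) :
  (forall k : nat,
     (INR k + aseq c 0 + sseq c k) / 2 <= aseq c k /\
     aseq c k <= INR k + aseq c 0 /\
     Lg / (INR k + aseq c 0) ^ 2
       <= gamma gamma0 c (S k) * beta Lg gamma0 c (S k) /\
     gamma gamma0 c (S k) * beta Lg gamma0 c (S k)
       <= 4 * Lg / (INR k + aseq c 0 + sseq c k) ^ 2)
  /\
  ((forall k, c k = 0) ->
     forall k : nat,
       beta Lg gamma0 c 0 / (INR k + 2) ^ 2 <= beta Lg gamma0 c (S k) /\
       beta Lg gamma0 c (S k) <= 4 * beta Lg gamma0 c 0 / (INR k + 1) ^ 2)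
  /\
  ((forall k, c k = 1) ->
     forall k : nat, beta Lg gamma0 c (S k) = beta Lg gamma0 c 0 / (INR k + 2)).
Proof.
  split; [|split].
  - intro k. pose proof aseq_ge c hc k. pose proof aseq_gt1 c hc 0.
    split; [lra|split; [apply aseq_le, hc|apply gamma_beta_bounds; auto; lra]].
  - intros H0 k. apply beta_bounds_c0; auto; lra.
  - intros H1 k. rewrite (beta_c1 _ _ _ (S k) H1), S_INR. f_equal. ring.
Qed.
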